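(* Let $W$ be an affine Weyl group, $w\in W$, $i\in D_R(w)$, and let $r_1,\dots,r_n$ be reflections with $H_{r_t}=H_{\alpha,c+t}$ for some root $\alpha$ and $c\in\mathbb{Z}$, such that for all $1\le t\le n$, $$\ell(r_t\cdots r_1ws_i)=\ell(r_{t-1}\cdots r_1ws_i)+1\quad\text{and}\quad r_t\cdots r_1ws_i\neq r_{t-1}\cdots r_1w.$$ Then $i\notin D_R(r_n\cdots r_1ws_i)$.
   Context: $W$ is the affine Weyl group of a crystallographic root system $\Phi$, a Coxeter group with simple generators $s_i$; $H_{\beta,k}=\{v:\langle v,\beta\rangle=k\}$ and reflections of $W$ are the reflections in these hyperplanes; $H_r$ denotes the hyperplane of the reflection $r$. $\ell$ is length and $D_R(w)=\{i:\ell(ws_i)<\ell(w)\}$ is the right descent set. *)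

From HB Require Import structures.
From mathcomp Require Import all_boot all_order all_algebra.
From mathcomp Require Import finmap.
From mathcomp Require Import boolp classical_sets cardinality reals.
Set Implicit Arguments. Unset Strict Implicit. Unset Printing Implicit Defensive.
Import Order.TTheory GRing.Theory Num.Theory.
Local Open Scope ring_scope.

Section AffineWeyl.
Variables (R : realType) (n : nat).

Definition vec := 'rV[R]_n.
Definition dot (u v : vec) : R := (u *m v^T) 0 0.

Definition refl (beta : vec) (k : int) (v : vec) : vec :=
  v - ((dot v beta - k%:~R) * 2 / dot beta beta) *: beta.

Definition hyperplane (beta : vec) (k : int) : set vec :=
  [set v | dot v beta = k%:~R].

Definition crystallographic_root_system (Phi : seq vec) : Prop :=
  [/\ (0 : vec) \notin Phi,
      (forall v : vec, (forall b, b \in Phi -> dot v b = 0) -> v = 0),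
      (forall a (c : R), a \in Phi -> c *: a \in Phi -> c = 1 \/ c = -1),
      (forall a b, a \in Phi -> b \in Phi -> refl a 0 b \in Phi) &
      (forall a b, a \in Phi -> b \in Phi ->
         exists z : int, 2 * dot b a / dot a a = z%:~R)].

Inductive inW (Phi : seq vec) : (vec -> vec) -> Prop :=
  | inW_id : inW Phi id
  | inW_refl f b k : inW Phi f -> b \in Phi -> inW Phi (refl b k \o f).

(* A regular vector rho determines the positive system
   Phi^+ = {b in Phi | <b,rho> > 0} *)
Definition regular (Phi : seq vec) (rho : vec) : Prop :=
  forall b, b \in Phi -> dot b rho != 0.

Definition positive (Phi : seq vec) (rho b : vec) : Prop :=
  b \in Phi /\ 0 < dot b rho.

Definition fund_alcove (Phi : seq vec) (rho : vec) : set vec :=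
  [set v | forall b, positive Phi rho b -> 0 < dot v b < 1].

Definition separates (Phi : seq vec) (rho : vec) (w : vec -> vec)
  (b : vec) (k : int) : Prop :=
  forall x y, fund_alcove Phi rho x -> fund_alcove Phi rho y ->
    (dot x b - k%:~R) * (dot (w y) b - k%:~R) < 0.

Definition len (Phi : seq vec) (rho : vec) (w : vec -> vec) : nat :=
  #|` fset_set [set p : vec * int |
         positive Phi rho p.1 /\ separates Phi rho w p.1 p.2] |%fset.

(* walls of the fundamental alcove: facets of the polyhedron A_0 *)
Definition wall (Phi : seq vec) (rho : vec) (b : vec) (k : int) : Prop :=
  [/\ positive Phi rho b, (k = 0 \/ k = 1) &
      exists x, dot x b = k%:~R /\
        forall g, positive Phi rho g -> g != b -> 0 < dot x g < 1].

Definition simple_refl (Phi : seq vec) (rho : vec) (s : vec -> vec) : Prop :=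
  exists b k, wall Phi rho b k /\ s = refl b k.

Definition right_descent (Phi : seq vec) (rho : vec) (w s : vec -> vec) : Prop :=
  (len Phi rho (w \o s) < len Phi rho w)%N.

Fixpoint rprod (r : nat -> vec -> vec) (t : nat) : vec -> vec :=
  match t with
  | 0 => id
  | t'.+1 => r t'.+1 \o rprod r t'
  end.

End AffineWeyl.

From HB Require Import structures.
From mathcomp Require Import all_boot all_order all_algebra.
From mathcomp Require Import finmap.
From mathcomp Require Import boolp classical_sets cardinality reals.
From mathcomp Require Import ring lra zify.
Set Implicit Arguments. Unset Strict Implicit. Unset Printing Implicit Defensive.
Import Order.TTheory GRing.Theory Num.Theory.
Local Open Scope ring_scope.

(* Choose x0 in the fundamental alcove so close to the wall H_s of s that x0
   and s x0 lie on the same side of every root hyperplane other than H_s.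
   The length of f in W counts the hyperplanes separating x0 from f x0, and a
   reflection sg satisfies len f < len (sg f) exactly when x0 and f x0 lie on
   the same side of H_sg: the hyperplanes separating x0 from f x0 inject into
   those separating x0 from sg f x0, missing H_sg.
   Let E = r_t ... r_1 w with len (E s) < len E. As r_(t+1) lengthens E s, x0
   and E s x0 lie on the same side of H_(r_(t+1)). As r_(t+1) E s <> E, E s
   does not map H_s onto H_(r_(t+1)), so E s x0 and E x0 = E s (s x0) lie on
   the same side as well. Hence r_(t+1) lengthens E, and
   len (r_(t+1) E s) = len (E s) + 1 <= len E < len (r_(t+1) E).
   By induction s remains a right descent of r_t ... r_1 w, which is the claim. *)

Section DotProduct.
Variables (R : realType) (n : nat).
Local Notation V := (vec R n).
Implicit Types (u v x y b : V) (a : R) (k : int).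

Lemma dotE u v : dot u v = \sum_i u 0 i * v 0 i.
Proof. by rewrite /dot !mxE; apply: eq_bigr => i _; rewrite mxE. Qed.

Lemma dotC u v : dot u v = dot v u.
Proof. by rewrite !dotE; apply: eq_bigr => i _; rewrite mulrC. Qed.

Lemma dotDl u v x : dot (u + v) x = dot u x + dot v x.
Proof. by rewrite !dotE -big_split; apply: eq_bigr => i _; rewrite mxE mulrDl. Qed.

Lemma dotZl a u x : dot (a *: u) x = a * dot u x.
Proof. by rewrite !dotE mulr_sumr; apply: eq_bigr => i _; rewrite mxE mulrA. Qed.

Lemma dotNl u x : dot (- u) x = - dot u x.
Proof. by rewrite -scaleN1r dotZl mulN1r. Qed.

Lemma dotBl u v x : dot (u - v) x = dot u x - dot v x.
Proof. by rewrite dotDl dotNl. Qed.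

Lemma dot0l x : dot 0 x = 0.
Proof. by rewrite -(scale0r (0 : V)) dotZl mul0r. Qed.

Lemma dotZr a u x : dot x (a *: u) = a * dot x u.
Proof. by rewrite dotC dotZl dotC. Qed.

Lemma dotNr u x : dot x (- u) = - dot x u.
Proof. by rewrite dotC dotNl dotC. Qed.

Lemma dotBr u v x : dot x (u - v) = dot x u - dot x v.
Proof. by rewrite dotC dotBl !(dotC x). Qed.

Lemma dot_self_ge0 v : 0 <= dot v v.
Proof. by rewrite dotE; apply: sumr_ge0 => i _; rewrite -expr2 sqr_ge0. Qed.

Lemma dot_self_eq0 v : (dot v v == 0) = (v == 0).
Proof.
apply/idP/eqP => [|->]; last by rewrite dot0l.
rewrite dotE psumr_eq0 => [/allP v0|i _]; last by rewrite -expr2 sqr_ge0.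
apply/matrixP => i j; rewrite (ord1 i) mxE.
by have := v0 j (mem_index_enum _); rewrite /= -expr2 sqrf_eq0 => /eqP.
Qed.

Lemma dot_ext x y : (forall v, dot v x = dot v y) -> x = y.
Proof.
move=> dotxy; apply/eqP; rewrite -subr_eq0 -dot_self_eq0.
by rewrite dotBr !dotxy subrr.
Qed.

Lemma dot_refl b k v x :
  dot (refl b k v) x = dot v x - (dot v b - k%:~R) * 2 / dot b b * dot b x.
Proof. by rewrite /refl dotBl dotZl. Qed.

Lemma reflK b k : dot b b != 0 -> cancel (refl b k) (refl b k).
Proof.
move=> bb v; rewrite {1}/refl dot_refl /refl.
set c := (dot v b - k%:~R) * 2 / dot b b.
have -> : (dot v b - c * dot b b - k%:~R) * 2 / dot b b = - c by rewrite /c; field.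
by rewrite scaleNr opprK subrK.
Qed.

End DotProduct.

Section Signs.
Variable R : realDomainType.

Lemma unit_interval_same_side (x y : R) (m : int) : 0 < x < 1 -> 0 < y < 1 ->
  0 < (x - m%:~R) * (y - m%:~R).
Proof.
move=> /andP[x0 x1] /andP[y0 y1].
have [m_le0|m_gt0] := lerP m 0.
  have : m%:~R <= 0 :> R by rewrite lerz0.
  nra.
have : 1 <= m%:~R :> R by rewrite ler1z.
nra.
Qed.

Lemma near_int_same_side (t : R) (k m : int) : `|t| < 1 -> m != k ->
  0 < (k%:~R + t - m%:~R) * (k%:~R - t - m%:~R).
Proof.
rewrite ltr_norml => /andP[t1 t2] mk.
have [m_lt|m_gt] : (m <= k - 1)%R \/ (k + 1 <= m)%R by lia.
  have : m%:~R <= k%:~R - 1 :> R by rewrite -(intrB _ k 1) ler_int.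
  nra.
have : k%:~R + 1 <= m%:~R :> R by rewrite -(intrD _ k 1) ler_int.
nra.
Qed.

Lemma same_sign_trans (x y z : R) : 0 < x * y -> 0 < y * z -> 0 < x * z.
Proof.
move=> xy yz; have y0 : y != 0 by apply: contraTneq xy => ->; rewrite mulr0 ltxx.
have yy : 0 < y * y by rewrite lt_def mulf_neq0 //= -expr2 sqr_ge0.
rewrite -(pmulr_lgt0 _ yy) (_ : x * z * (y * y) = (x * y) * (y * z)).
  exact: mulr_gt0.
ring.
Qed.

End Signs.

Lemma small_shift_in_unit_interval (R : realFieldType) (T : eqType) (l : seq T)
    (P : T -> Prop) (x d : T -> R) :
  (forall g, g \in l -> P g -> 0 < x g < 1) ->
  exists2 e, 0 < e & forall g t, g \in l -> P g -> `|t| <= e -> 0 < x g + t * d g < 1.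
Proof.
elim: l => [|g0 l IHl] xl; first by exists 1.
have [e e0 He] : exists2 e, 0 < e &
    forall g t, g \in l -> P g -> `|t| <= e -> 0 < x g + t * d g < 1.
  by apply: IHl => g gl; apply: xl; rewrite inE gl orbT.
have [Pg0|nPg0] := pselect (P g0); last first.
  by exists e => // g t; rewrite inE => /orP[/eqP -> //|]; apply: He.
have /andP[xg0_gt0 xg0_lt1] := xl g0 (mem_head _ _) Pg0.
set m := Num.min (x g0) (1 - x g0).
have m_gt0 : 0 < m by rewrite lt_min xg0_gt0 subr_gt0.
have dg0 : 0 < 1 + `|d g0| by rewrite ltr_pwDl.
pose e0' := m / (1 + `|d g0|).
have e0'_gt0 : 0 < e0' by rewrite divr_gt0.
exists (Num.min e e0'); first by rewrite lt_min e0.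
move=> g t; rewrite inE le_min => /orP[/eqP ->|gl] Pg /andP[te te0']; last exact: He.
have td : `|t * d g0| < m.
  rewrite normrM (le_lt_trans (ler_wpM2r (normr_ge0 _) te0')) //.
  by rewrite mulrAC ltr_pdivrMr // ltr_pM2l // ltrDr.
have := ler_norm (t * d g0); have := ler_norm (- (t * d g0)); rewrite normrN.
have : m <= x g0 by rewrite ge_min lexx.
have : m <= 1 - x g0 by rewrite ge_min lexx orbT.
by move=> *; apply/andP; split; lra.
Qed.

Lemma ltn_card_fset_set (T T' : choiceType) (A : set T) (B : set T') (phi : T -> T') M :
  finite_set A -> finite_set B -> (forall p, A p -> B (phi p)) ->
  (forall p q, A p -> A q -> phi p = phi q -> p = q) -> B M ->
  (forall p, A p -> phi p <> M) -> (#|` fset_set A| < #|` fset_set B|)%N.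
Proof.
move=> Afin Bfin AB phi_inj BM phiM.
set X := [fset phi p | p in fset_set A]%fset.
have cardX : #|` X| = #|` fset_set A|.
  by apply/eqP/card_in_imfsetP => p q; rewrite !in_fset_set // !inE; apply: phi_inj.
have MX : M \notin X.
  apply/negP => /imfsetP[p /= + Mp]; rewrite in_fset_set // inE => Ap.
  exact: phiM Ap (esym Mp).
have MXB : (M |` X `<=` fset_set B)%fset.
  apply/fsubsetP => q; rewrite !inE => /orP[/eqP ->|/imfsetP[p /= + ->]].
    by rewrite in_fset_set // inE.
  by rewrite !in_fset_set // !inE => /AB.
by have := fsubset_leq_card MXB; rewrite cardfsU1 MX cardX.
Qed.

Lemma finite_int_bounded (R : archiRealDomainType) (x : R) :
  finite_set [set k : int | `|k%:~R| <= x].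
Proof.
set m := Num.bound `|x|.
apply: (@sub_finite_set _ _ ((fun i : nat => i%:Z - m%:Z) @` `I_(m + m).+1)).
  move=> k /= kx; have : `|k| < m%:Z.
    rewrite -(ltr_int R) intr_norm (le_lt_trans kx) //.
    exact: le_lt_trans (ler_norm x) (archi_boundP (normr_ge0 x)).
  by exists (absz (k + m%:Z)) => /=; lia.
exact/finite_image/finite_II.
Qed.

Section AffineWeylGroup.
Variables (R : realType) (n : nat) (Phi : seq (vec R n)) (rho : vec R n).
Local Notation V := (vec R n).
Hypothesis CRS : crystallographic_root_system Phi.
Hypothesis REG : regular Phi rho.

Definition hform (p : V * int) (v : V) : R := dot v p.1 - p.2%:~R.

Lemma hformN b k v : hform (- b, - k) v = - hform (b, k) v.
Proof. by rewrite /hform dotNr intrN opprD. Qed.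

Lemma root_dot_neq0 b : b \in Phi -> dot b b != 0.
Proof.
case: CRS => Phi0 _ _ _ _ bPhi; rewrite dot_self_eq0.
by apply: contraNneq Phi0 => <-.
Qed.

Lemma root_refl a b : a \in Phi -> b \in Phi -> refl a 0 b \in Phi.
Proof. by case: CRS => _ _ _ + _; apply. Qed.

Lemma root_cartan a b : a \in Phi -> b \in Phi ->
  exists z : int, 2 * dot b a / dot a a = z%:~R.
Proof. by case: CRS => _ _ _ _; apply. Qed.

Lemma root_opp b : b \in Phi -> - b \in Phi.
Proof.
move=> bPhi; suff <- : refl b 0 b = - b by apply: root_refl.
rewrite /refl subr0 mulrAC divff ?root_dot_neq0 // mul1r.
by rewrite scaler_nat mulr2n opprD addrA subrr add0r.
Qed.

Lemma positive_or_positiveN b : b \in Phi ->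
  positive Phi rho b \/ positive Phi rho (- b).
Proof.
move=> bPhi; have := REG bPhi; rewrite neq_lt => /orP[b_neg|b_pos]; last by left.
by right; split; [exact: root_opp | rewrite dotNl oppr_gt0].
Qed.

Lemma hform_refl a k b m z v : 2 * dot b a / dot a a = z%:~R ->
  hform (b, m) (refl a k v) = hform (refl a 0 b, m - z * k) v.
Proof.
move=> bz; rewrite /hform dot_refl /refl dotBr dotZr (dotC a b) intrB intrM -bz.
rewrite subr0; ring.
Qed.

Lemma inW_comp f g : inW Phi f -> inW Phi g -> inW Phi (f \o g).
Proof. by move=> + gW; elim=> [//|f' b k _ f'gW bPhi]; apply: inW_refl. Qed.

Lemma inW_rprod (r : nat -> V -> V) w t : inW Phi w ->
  (forall i, (0 < i <= t)%N -> exists b k, b \in Phi /\ r i = refl b k) ->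
  inW Phi (rprod r t \o w).
Proof.
move=> wW; elim: t => [|t IHt] r_refl //=.
have [b [k [bPhi ->]]] := r_refl t.+1 (leqnn _).
apply: inW_refl bPhi; apply: IHt => i /andP[i0 it]; apply: r_refl.
by rewrite i0 ltnW.
Qed.

Lemma inW_hform f : inW Phi f -> forall b (m : int), b \in Phi ->
  exists b' (m' : int), b' \in Phi /\ hform (b, m) \o f = hform (b', m').
Proof.
elim=> [|g a k _ IHg aPhi] b m bPhi; first by exists b, m.
have [z bz] := root_cartan aPhi bPhi.
have [b' [m' [b'Phi gE]]] := IHg _ (m - z * k) (root_refl aPhi bPhi).
exists b', m'; split => //; apply/funext => v /=.
by rewrite (hform_refl _ _ _ bz) -gE.
Qed.

Lemma fund_alcove_same_side x y b m : fund_alcove Phi rho x ->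
  fund_alcove Phi rho y -> b \in Phi -> 0 < hform (b, m) x * hform (b, m) y.
Proof.
move=> xA yA bPhi; case: (positive_or_positiveN bPhi) => bpos.
  exact: unit_interval_same_side (xA _ bpos) (yA _ bpos).
have := unit_interval_same_side (- m) (xA _ bpos) (yA _ bpos).
by rewrite !dotNr intrN -!opprD mulrNN.
Qed.

Lemma inW_same_side f x y b m : inW Phi f -> fund_alcove Phi rho x ->
  fund_alcove Phi rho y -> b \in Phi -> 0 < hform (b, m) (f x) * hform (b, m) (f y).
Proof.
move=> fW xA yA bPhi; have [b' [m' [b'Phi fE]]] := inW_hform fW m bPhi.
have := fund_alcove_same_side m' xA yA b'Phi.
by rewrite -fE.
Qed.

Lemma hform_inj p q (e : R) : positive Phi rho p.1 -> positive Phi rho q.1 ->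
  e * e = 1 -> (forall v, hform p v = e * hform q v) -> p = q.
Proof.
case: p q => [b1 m1] [b2 m2] /= [_ b1pos] [_ b2pos] ee pq.
have := pq 0; rewrite /hform /= !dot0l !add0r => m12.
have b12 : b1 = e *: b2.
  by apply: dot_ext => v; have := pq v; rewrite /hform /= dotZr; nra.
have e_sign : e = 1 \/ e = -1.
  have /eqP : (e - 1) * (e + 1) = 0 by rewrite mulrDr !mulrBl; lra.
  by rewrite mulf_eq0 => /orP[/eqP|/eqP]; [left|right]; lra.
case: e_sign => e1; last first.
  by move: b1pos; rewrite b12 e1 scaleN1r dotNl => ?; exfalso; lra.
rewrite b12 e1 scale1r; congr (_, _); move: m12; rewrite e1 mul1r.
by move/eqP; rewrite eqr_opp eqr_int => /eqP.
Qed.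

Definition pos_hyp (p : V * int) : V * int :=
  if 0 < dot p.1 rho then p else (- p.1, - p.2).

Lemma pos_hypP p : p.1 \in Phi -> positive Phi rho (pos_hyp p).1 /\
  exists e : R, e * e = 1 /\ forall v, hform (pos_hyp p) v = e * hform p v.
Proof.
case: p => b m /= bPhi; rewrite /pos_hyp /=; case: ifP => bpos.
  by split; [|exists 1; split=> [|v]]; rewrite ?mul1r.
split; first split; first exact: root_opp.
  by rewrite dotNl oppr_gt0; have := REG bPhi; rewrite neq_lt bpos orbF.
by exists (-1); split=> [|v]; rewrite ?mulrNN ?mulr1 // hformN mulN1r.
Qed.

End AffineWeylGroup.

Section Isometries.
Variables (R : realType) (n : nat) (Phi : seq (vec R n)).
Local Notation V := (vec R n).
Implicit Types (u v a b : V) (L : 'M[R]_n).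

Definition refl_mx b : 'M[R]_n := 1%:M - (2 / dot b b) *: (b^T *m b).

Lemma mulmx_trmx_dot u b : u *m b^T = (dot u b)%:M.
Proof. exact: mx11_scalar. Qed.

Lemma dot_mulmxl L u a : dot (u *m L) a = dot u (a *m L^T).
Proof. by rewrite /dot trmx_mul trmxK mulmxA. Qed.

Lemma dot_mulmx_orthogonal L u v : L *m L^T = 1%:M -> dot (u *m L) (v *m L) = dot u v.
Proof. by move=> LLT; rewrite dot_mulmxl -mulmxA LLT mulmx1. Qed.

Lemma refl_affine b k : dot b b != 0 ->
  forall u, refl b k u = u *m refl_mx b + (k%:~R * 2 / dot b b) *: b.
Proof.
move=> bb u; rewrite /refl /refl_mx mulmxBr mulmx1 -scalemxAr mulmxA mulmx_trmx_dot.
rewrite mul_scalar_mx scalerA -addrA; congr (_ + _).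
by rewrite -!scaleNr -scalerDl; congr (_ *: _); field.
Qed.

Lemma refl_mx_orthogonal b : dot b b != 0 -> refl_mx b *m (refl_mx b)^T = 1%:M.
Proof.
move=> bb.
have -> : (refl_mx b)^T = refl_mx b.
  by rewrite /refl_mx linearB /= linearZ /= trmx_mul trmxK trmx1.
have bTb2 : b^T *m b *m (b^T *m b) = dot b b *: (b^T *m b).
  by rewrite mulmxA -(mulmxA _ b) mulmx_trmx_dot mul_mx_scalar -scalemxAl.
rewrite /refl_mx mulmxBr mulmx1 mulmxBl mul1mx -!scalemxAr -!scalemxAl bTb2 !scalerA.
have -> : 2 / dot b b * (2 / dot b b) * dot b b = 2 / dot b b + 2 / dot b b by field.
by rewrite scalerDl opprB addrK subrK.
Qed.

Hypothesis CRS : crystallographic_root_system Phi.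

Lemma inW_affine_orthogonal f : inW Phi f ->
  exists L, L *m L^T = 1%:M /\ forall v, f v = f 0 + v *m L.
Proof.
elim=> [|g b k _ [L [LLT gE]] bPhi].
  by exists 1%:M; split=> [|v]; rewrite ?trmx1 mulmx1 // add0r.
have bb := root_dot_neq0 CRS bPhi.
exists (L *m refl_mx b); split.
  by rewrite trmx_mul mulmxA -(mulmxA L) refl_mx_orthogonal // mulmx1.
move=> v /=; rewrite !refl_affine // gE (gE 0) mul0mx addr0 mulmxDl mulmxA.
by rewrite -!addrA; congr (_ + _); rewrite addrC.
Qed.

Lemma refl_conj D a b k m (e : R) : inW Phi D -> e * e = 1 ->
  (forall v, hform (a, k) (D v) = e * hform (b, m) v) ->
  refl a k \o D = D \o refl b m.
Proof.
move=> DW ee DE; rewrite /hform /= in DE.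
have [L [LLT DL]] := inW_affine_orthogonal DW.
have LTL : L^T *m L = 1%:M by apply: mulmx1C.
have dotLa v : dot (v *m L) a = e * dot v b.
  by have := DE 0; have := DE v; rewrite (DL v) dotDl dot0l; nra.
have aLT : a *m L^T = e *: b by apply: dot_ext => v; rewrite -dot_mulmxl dotLa dotZr.
have bL : b *m L = e *: a.
  have -> : a = e *: (b *m L) by rewrite scalemxAl -aLT -mulmxA LTL mulmx1.
  by rewrite scalerA ee scale1r.
have ab : dot a a = dot b b.
  by rewrite -(dot_mulmx_orthogonal b b LLT) bL dotZl dotZr mulrA ee mul1r.
apply/funext => v /=.
rewrite [D (refl _ _ _)]DL /refl mulmxBl -scalemxAl bL scalerA addrA -DL.
by rewrite DE ab; congr (_ - _ *: _); ring.
Qed.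

End Isometries.

Section SeparatingHyperplanes.
Variables (R : realType) (n : nat) (Phi : seq (vec R n)) (rho : vec R n).
Local Notation V := (vec R n).
Hypothesis CRS : crystallographic_root_system Phi.
Hypothesis REG : regular Phi rho.
Variables (x0 : V).
Hypothesis x0A : fund_alcove Phi rho x0.

Definition sep_hyps (z : V) : set (V * int) :=
  [set p | positive Phi rho p.1 /\ hform p x0 * hform p z < 0].

Lemma finite_sep_hyps z : finite_set (sep_hyps z).
Proof.
pose bound b := [set k : int | `|k%:~R| <= `|dot x0 b| + `|dot z b|]%classic.
apply: (@sub_finite_set _ _ ([set` Phi] `*`` bound)); last first.
  by apply: finite_setXR => [|b _]; [exact: finite_seq | exact: finite_int_bounded].
move=> [b k] [[bPhi _] /= sep_bk]; split => //=; rewrite /bound /= ler_norml.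
have := ler_norm (dot x0 b); have := ler_norm (dot z b).
have := ler_norm (- dot x0 b); have := ler_norm (- dot z b); rewrite !normrN.
by rewrite /hform /= in sep_bk; move=> *; apply/andP; split; nra.
Qed.

Lemma len_sep_hyps f : inW Phi f -> len Phi rho f = #|` fset_set (sep_hyps (f x0))|.
Proof.
move=> fW; rewrite /len; congr (#|` fset_set _|).
apply/funext => p; apply/propext; split => -[ppos sep_p]; split => //.
  exact: sep_p.
move=> x y xA yA; have bPhi : p.1 \in Phi by case: ppos.
have := fund_alcove_same_side CRS REG p.2 xA x0A bPhi.
have := inW_same_side CRS REG p.2 fW yA x0A bPhi.
by rewrite /hform /= in sep_p *; nra.
Qed.

End SeparatingHyperplanes.

Section ReflectedHyperplanes.
Variables (R : realType) (n : nat) (Phi : seq (vec R n)) (rho : vec R n).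
Local Notation V := (vec R n).
Hypothesis CRS : crystallographic_root_system Phi.
Hypothesis REG : regular Phi rho.
Variables (a : V) (k : int).
Hypothesis aPhi : a \in Phi.
Local Notation sg := (refl a k).
Local Notation h := (hform (a, k)).

Lemma refl_rootK : cancel sg sg.
Proof. by apply: reflK; exact: (root_dot_neq0 CRS aPhi). Qed.

Lemma hform_refl_shift p v : hform p (sg v) = hform p v - 2 / dot a a * dot a p.1 * h v.
Proof. by rewrite /hform dot_refl /=; ring. Qed.

Lemma hform_refl_self v : h (sg v) = - h v.
Proof. by rewrite hform_refl_shift /hform /=; field; exact: (root_dot_neq0 CRS aPhi). Qed.

Definition cartan (b : V) : int := Num.floor (2 * dot b a / dot a a).

Lemma cartanE b : b \in Phi -> (cartan b)%:~R = 2 * dot b a / dot a a.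
Proof.
by move=> bPhi; rewrite /cartan; have [z ->] := root_cartan CRS aPhi bPhi; rewrite intrKfloor.
Qed.

(* The hyperplane sg (H_p), written with a positive root. *)
Definition refl_hyp (p : V * int) : V * int :=
  pos_hyp rho (refl a 0 p.1, p.2 - cartan p.1 * k).

Lemma refl_hypP p : p.1 \in Phi -> positive Phi rho (refl_hyp p).1 /\
  exists e : R, e * e = 1 /\ forall v, hform (refl_hyp p) v = e * hform p (sg v).
Proof.
case: p => b m /= bPhi.
have b'Phi : (refl a 0 b, m - cartan b * k).1 \in Phi := root_refl CRS aPhi bPhi.
have [pos [e [ee rhE]]] := pos_hypP CRS REG b'Phi.
split => //; exists e; split => // v.
by rewrite rhE (hform_refl _ _ _ (esym (cartanE bPhi))).
Qed.

Lemma refl_hyp_inj p q : positive Phi rho p.1 -> positive Phi rho q.1 ->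
  refl_hyp p = refl_hyp q -> p = q.
Proof.
move=> ppos qpos pq.
have [_ [ep [epe pE]]] := refl_hypP (proj1 ppos).
have [_ [e' [ee' qE]]] := refl_hypP (proj1 qpos).
apply: (hform_inj ppos qpos (e := ep * e')); first by rewrite mulrACA epe ee' mulr1.
move=> u; have := pE (sg u); rewrite pq qE !refl_rootK => puq.
by rewrite -[LHS]mul1r -epe -mulrA -puq mulrA.
Qed.

Lemma refl_hyp_self p : positive Phi rho p.1 ->
  refl_hyp p = pos_hyp rho (a, k) -> p = pos_hyp rho (a, k).
Proof.
move=> ppos pa.
have [_ [ep [epe pE]]] := refl_hypP (proj1 ppos).
have [apos [ea [eae aE]]] := pos_hypP CRS REG (aPhi : (a, k).1 \in Phi).
apply: (hform_inj ppos apos (e := - ep)); first by rewrite mulrNN.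
move=> u; have := pE (sg u); rewrite pa aE !refl_rootK hform_refl_self => pu.
have hu : h u = ea * hform (pos_hyp rho (a, k)) u by rewrite aE mulrA eae mul1r.
have -> : hform p u = ep * (ea * - h u) by rewrite pu mulrA epe mul1r.
by rewrite hu mulrN mulrA eae mul1r; ring.
Qed.

End ReflectedHyperplanes.

Section ReflectionLength.
Variables (R : realType) (n : nat) (Phi : seq (vec R n)) (rho : vec R n).
Local Notation V := (vec R n).
Hypothesis CRS : crystallographic_root_system Phi.
Hypothesis REG : regular Phi rho.
Variables (x0 a : V) (k : int).
Hypothesis x0A : fund_alcove Phi rho x0.
Hypothesis aPhi : a \in Phi.
Local Notation sg := (refl a k).
Local Notation h := (hform (a, k)).
Local Notation sep := (sep_hyps Phi rho x0).
Local Notation rhyp := (refl_hyp rho a k).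
Local Notation ahyp := (pos_hyp rho (a, k)).
Let sgK : cancel sg sg := refl_rootK CRS k aPhi.
Let h_sg v : h (sg v) = - h v := hform_refl_self CRS k aPhi v.

Section SameSide.
Variable y : V.
Hypothesis y_side : 0 < h x0 * h y.

Lemma refl_hyp_sep p : sep y p -> ~ sep (sg y) p -> sep (sg y) (rhyp p).
Proof.
move=> [ppos sep_y] /= nsep_sy; have pPhi : p.1 \in Phi by case: ppos.
have [rpos [e [ee rE]]] := refl_hypP CRS REG k aPhi pPhi.
split => //; rewrite /= !rE sgK mulrACA ee mul1r.
have E0 := hform_refl_shift a k p x0; have Ey := hform_refl_shift a k p y.
set g := 2 / dot a a * dot a p.1 in E0 Ey.
set F0 := hform p x0 in sep_y nsep_sy E0 *; set Fy := hform p y in sep_y Ey *.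
set G0 := hform p (sg x0) in E0 *; set Gy := hform p (sg y) in nsep_sy Ey *.
(* (F0 - G0) (Fy - Gy) = g^2 h x0 h y >= 0, whereas F0 Fy < 0 <= F0 Gy, G0 Fy
   force G0 Gy <= 0 and hence (F0 - G0) (Fy - Gy) < 0. *)
have F0Gy : 0 <= F0 * Gy by rewrite leNgt; apply/negP => ?; apply: nsep_sy; split.
rewrite ltNge; apply/negP => G0Fy.
have G0Gy : G0 * Gy <= 0.
  have : (G0 * Gy) * (F0 * Fy) = (G0 * Fy) * (F0 * Gy) by ring.
  have : 0 <= (G0 * Fy) * (F0 * Gy) by apply: mulr_ge0.
  nra.
have : 0 <= g * g * (h x0 * h y) by rewrite -expr2 mulr_ge0 ?sqr_ge0 ?ltW.
have -> : g * g * (h x0 * h y) = (F0 - G0) * (Fy - Gy) by rewrite E0 Ey; ring.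
nra.
Qed.

Lemma refl_hyp_sep_neq p q : sep y p -> sep y q -> sep (sg y) p -> ~ sep (sg y) q ->
  p <> rhyp q.
Proof.
move=> [_ sep_p] [qpos sep_q] [_ sep_sp] nsep_sq pq.
have [_ [e [ee rE]]] := refl_hypP CRS REG k aPhi (proj1 qpos).
have F0Gy : 0 <= hform q x0 * hform q (sg y).
  by rewrite leNgt; apply/negP => ?; apply: nsep_sq; split.
rewrite pq !rE mulrACA ee mul1r in sep_p.
rewrite pq !rE sgK mulrACA ee mul1r in sep_sp.
have : (hform q x0 * hform q y) * (hform q (sg x0) * hform q (sg y)) =
       (hform q x0 * hform q (sg y)) * (hform q (sg x0) * hform q y) by ring.
nra.
Qed.

Lemma ahyp_sep : sep (sg y) ahyp /\ ~ sep y ahyp.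
Proof.
have [apos [e [ee aE]]] := pos_hypP CRS REG (aPhi : (a, k).1 \in Phi).
split; first split => //.
  by rewrite !aE h_sg mulrACA ee mul1r mulrN oppr_lt0.
by move=> [_]; rewrite !aE mulrACA ee mul1r; apply/negP; rewrite -leNgt ltW.
Qed.

Lemma card_sep_hyps_refl_lt : (#|` fset_set (sep y)| < #|` fset_set (sep (sg y))|)%N.
Proof.
pose phi p := if pselect (sep (sg y) p) then p else rhyp p.
have [ahyp_sy ahyp_y] := ahyp_sep.
apply: (@ltn_card_fset_set _ _ _ _ phi ahyp _ _ _ _ ahyp_sy); try exact: finite_sep_hyps.
- by move=> p sep_p; rewrite /phi; case: pselect => //; apply: refl_hyp_sep.
- move=> p q sep_p sep_q; rewrite /phi.
  case: pselect => sp; case: pselect => sq /= pq //.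
  + by case: (refl_hyp_sep_neq sep_p sep_q sp sq pq).
  + by case: (refl_hyp_sep_neq sep_q sep_p sq sp (esym pq)).
  + exact: (refl_hyp_inj CRS REG aPhi (proj1 sep_p) (proj1 sep_q) pq).
- move=> p sep_p; rewrite /phi; case: pselect => sp /= pa.
    by apply: ahyp_y; rewrite -pa.
  by apply: ahyp_y; rewrite -(refl_hyp_self CRS REG aPhi (proj1 sep_p) pa).
Qed.

End SameSide.

Lemma len_refl_gt f : inW Phi f -> 0 < h x0 * h (f x0) ->
  (len Phi rho f < len Phi rho (sg \o f))%N.
Proof.
move=> fW side; rewrite (len_sep_hyps CRS REG x0A fW) (len_sep_hyps CRS REG x0A).
  exact: card_sep_hyps_refl_lt.
exact: inW_refl.
Qed.

Lemma len_refl_gtP f : inW Phi f ->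
  (len Phi rho f < len Phi rho (sg \o f))%N = (0 < h x0 * h (f x0)).
Proof.
move=> fW; apply/idP/idP => [lt_f|]; last exact: len_refl_gt.
have hf : 0 < h (f x0) * h (f x0) := inW_same_side CRS REG k fW x0A x0A aPhi.
have h0 : 0 < h x0 * h x0 := fund_alcove_same_side CRS REG k x0A x0A aPhi.
rewrite ltNge le_eqVlt; apply/negP => /orP[/eqP|opposite]; first by nra.
have := @len_refl_gt (sg \o f) (inW_refl k fW aPhi).
rewrite /= h_sg mulrN oppr_gt0 => /(_ opposite).
have -> : sg \o (sg \o f) = f by apply/funext => v /=; rewrite sgK.
by rewrite ltnNge ltnW.
Qed.

End ReflectionLength.

Section WallPoint.
Variables (R : realType) (n : nat) (Phi : seq (vec R n)) (rho : vec R n).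
Local Notation V := (vec R n).
Hypothesis CRS : crystallographic_root_system Phi.
Hypothesis REG : regular Phi rho.

Lemma wall_point b0 k0 : wall Phi rho b0 k0 -> exists2 x0, fund_alcove Phi rho x0 &
  forall b m, b \in Phi -> (b, m) != (b0, k0) -> (b, m) != (- b0, - k0) ->
    0 < hform (b, m) x0 * hform (b, m) (refl b0 k0 x0).
Proof.
move=> [[b0Phi b0pos] k01 [xw [xw_wall xw_int]]].
have bb : 0 < dot b0 b0 by rewrite lt_def (root_dot_neq0 CRS b0Phi) dot_self_ge0.
(* c0 = 1 - 2 k0 = +-1 makes d = c0 *: b0 point from the wall into the alcove. *)
pose c0 : R := 1 - 2 * k0%:~R; pose d := c0 *: b0.
have [e e_gt0 shift] := @small_shift_in_unit_interval _ _ Phi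
  (fun g => positive Phi rho g /\ g != b0) (dot xw) (dot d)
  (fun g _ gP => xw_int g (proj1 gP) (proj2 gP)).
have bb1 : 0 < 1 + dot b0 b0 by rewrite addr_gt0.
pose t := Num.min e (1 / (1 + dot b0 b0)).
have t_gt0 : 0 < t by rewrite lt_min e_gt0 divr_gt0.
have t_le_e : `|t| <= e by rewrite gtr0_norm // ge_min lexx.
have tbb_gt0 : 0 < t * dot b0 b0 by rewrite mulr_gt0.
have tbb_lt1 : t * dot b0 b0 < 1.
  have : t <= 1 / (1 + dot b0 b0) by rewrite ge_min lexx orbT.
  by rewrite ler_pdivlMr // => ?; nra.
have dot_shift s g : dot (xw + s *: d) g = dot xw g + s * dot d g.
  by rewrite dotDl dotZl.
have dot_shift_b0 s : dot (xw + s *: d) b0 = k0%:~R + s * (c0 * dot b0 b0).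
  by rewrite dot_shift xw_wall /d dotZl.
have refl_shift : refl b0 k0 (xw + t *: d) = xw + (- t) *: d.
  rewrite /refl dot_shift_b0.
  have -> : (k0%:~R + t * (c0 * dot b0 b0) - k0%:~R) * 2 / dot b0 b0 = 2 * t * c0.
    by field; rewrite gt_eqF.
  by rewrite /d !scalerA -addrA -scalerBl; congr (_ + _ *: _); ring.
exists (xw + t *: d).
  move=> g gpos; have [->|gb0] := eqVneq g b0; last first.
    by rewrite dot_shift; apply: shift => //; case: gpos.
  by rewrite dot_shift_b0 /c0; case: k01 => ->; apply/andP; split; lra.
move=> b m bPhi; wlog bpos : b m bPhi / positive Phi rho b.
  move=> same_side ne1 ne2; case: (positive_or_positiveN CRS REG bPhi) => [bpos|bneg].
    exact: same_side.
  rewrite -mulrNN -!hformN; apply: (same_side _ _ (root_opp CRS bPhi) bneg).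
    by apply: contraNneq ne2 => -[<- <-]; rewrite !opprK.
  by apply: contraNneq ne1 => -[/oppr_inj-> /oppr_inj->].
move=> ne1 _; rewrite /hform /= refl_shift.
have [bb0|bb0] := eqVneq b b0; last first.
  by apply: unit_interval_same_side; rewrite dot_shift; apply: shift;
    rewrite ?normrN //; case: bpos.
rewrite bb0 !dot_shift_b0 mulNr.
apply: near_int_same_side; last by apply: contraNneq ne1 => ->; rewrite bb0.
have c0E : c0 = 1 \/ c0 = -1 by rewrite /c0; case: k01 => ->; [left|right]; lra.
rewrite !normrM (gtr0_norm t_gt0) (gtr0_norm bb).
by case: c0E => ->; rewrite ?normrN normr1 mul1r.
Qed.

End WallPoint.

Section DescentStep.
Variables (R : realType) (n : nat) (Phi : seq (vec R n)) (rho : vec R n).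
Local Notation V := (vec R n).
Hypothesis CRS : crystallographic_root_system Phi.
Hypothesis REG : regular Phi rho.
Variables (b0 : V) (k0 : int) (a : V) (k : int).
Hypothesis aPhi : a \in Phi.
Local Notation s := (refl b0 k0).
Local Notation sg := (refl a k).
Local Notation h := (hform (a, k)).

Lemma same_side_or_refl_conj x0 D : inW Phi D ->
  (forall b m, b \in Phi -> (b, m) != (b0, k0) -> (b, m) != (- b0, - k0) ->
    0 < hform (b, m) x0 * hform (b, m) (s x0)) ->
  0 < h (D x0) * h (D (s x0)) \/ sg \o D = D \o s.
Proof.
move=> DW x0_side; have [b' [m' [b'Phi hD]]] := inW_hform CRS DW k aPhi.
have hDE v : h (D v) = hform (b', m') v by rewrite -hD.
have [eq1|ne1] := eqVneq (b', m') (b0, k0).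
  right; apply: (refl_conj CRS DW (e := 1)) => [|v]; first by rewrite mulr1.
  by rewrite mul1r hDE eq1.
have [eq2|ne2] := eqVneq (b', m') (- b0, - k0).
  right; apply: (refl_conj CRS DW (e := -1)) => [|v]; first by rewrite mulrNN mulr1.
  by rewrite mulN1r -hformN hDE eq2.
by left; rewrite !hDE; apply: x0_side.
Qed.

Hypothesis b0_wall : wall Phi rho b0 k0.

Lemma right_descent_refl E : inW Phi E -> right_descent Phi rho E s ->
  len Phi rho (sg \o E \o s) = (len Phi rho (E \o s)).+1 -> sg \o E \o s <> E ->
  right_descent Phi rho (sg \o E) s.
Proof.
move=> EW E_desc len_sgEs sgEs_neq.
have [x0 x0A x0_side] := wall_point CRS REG b0_wall.
have b0Phi : b0 \in Phi by case: b0_wall => -[].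
have sK : cancel s s := refl_rootK CRS k0 b0Phi.
have EsW : inW Phi (E \o s) := inW_comp EW (inW_refl k0 (inW_id Phi) b0Phi).
have side_Es : 0 < h x0 * h (E (s x0)).
  by rewrite -(len_refl_gtP CRS REG k x0A aPhi EsW) [X in (_ < X)%N]len_sgEs.
have side_Es_E : 0 < h (E (s x0)) * h (E x0).
  case: (same_side_or_refl_conj EsW x0_side) => [|conj]; first by rewrite /= sK.
  case: sgEs_neq; apply/funext => v.
  by have := congr1 (fun f => f v) conj; rewrite /= sK.
have := len_refl_gt CRS REG x0A aPhi EW (same_sign_trans side_Es side_Es_E).
by move: E_desc; rewrite /right_descent len_sgEs; lia.
Qed.

End DescentStep.

Unset Implicit Arguments.

Theorem corollary4p6 (R : realType) (n : nat) (Phi : seq (vec R n)) (rho : vec R n)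
  (w s : vec R n -> vec R n) (r : nat -> vec R n -> vec R n)
  (alpha : vec R n) (c : int) (N : nat) :
  crystallographic_root_system Phi ->
  regular Phi rho ->
  inW Phi w ->
  simple_refl Phi rho s ->
  right_descent Phi rho w s ->
  alpha \in Phi ->
  (forall t : nat, (1 <= t <= N)%N -> r t = refl alpha (c + t%:Z)) ->
  (forall t : nat, (1 <= t <= N)%N ->
     len Phi rho (rprod r t \o w \o s) = (len Phi rho (rprod r t.-1 \o w \o s)).+1 /\
     rprod r t \o w \o s <> rprod r t.-1 \o w) ->
  ~ right_descent Phi rho (rprod r N \o w \o s) s.
Proof.
move=> CRS REG wW [b0 [k0 [b0_wall ->]]] w_desc aPhi rE rlen.
have b0Phi : b0 \in Phi by case: b0_wall => -[].
have descN : right_descent Phi rho (rprod r N \o w) (refl b0 k0).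
  have : (N <= N)%N by [].
  elim: {-2}N => [|t IHt] tN; first exact: w_desc.
  have t1N : (1 <= t.+1 <= N)%N by rewrite tN.
  have [len_t neq_t] := rlen _ t1N.
  have rtW : inW Phi (rprod r t \o w).
    apply: (inW_rprod (t := t) wW) => i /andP[i0 it]; exists alpha, (c + i%:Z); split => //.
    by rewrite rE // i0 (leq_trans it (ltnW tN)).
  move: len_t neq_t; rewrite /= rE // => len_t neq_t.
  exact: (right_descent_refl CRS REG aPhi b0_wall rtW (IHt (ltnW tN)) len_t neq_t).
have sK := refl_rootK CRS k0 b0Phi.
rewrite /right_descent (_ : _ \o refl b0 k0 \o refl b0 k0 = rprod r N \o w).
  by move: descN; rewrite /right_descent; lia.
by apply/funext => v /=; rewrite sK.
Qed.
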